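(* Let $u$ be a positive integer, $\mathcal F$ and $\mathcal C$ finite sets, and let $x_{i,j}\ge0$ ($i\in\mathcal F,j\in\mathcal C$) and $y_i\ge0$ ($i\in\mathcal F$) satisfy $\sum_{i\in\mathcal F}x_{i,j}=1$ for every $j\in\mathcal C$. Let $\mathcal B\subseteq\mathcal F$ and suppose that $x_{\mathcal B,\mathcal J}\le f(|\mathcal J|,y_{\mathcal B})$ for every $\mathcal J\subseteq\mathcal C$. Let $y'_{\mathcal B}=\frac1u\sum_{j\in\mathcal C}x_{\mathcal B,j}$ and suppose $y'_{\mathcal B}\ge\lfloor y_{\mathcal B}\rfloor$. Then $$\sum_{j\in\mathcal C}x_{\mathcal B,j}(1-x_{\mathcal B,j})\ \ge\ u\,\big(y'_{\mathcal B}-\lfloor y'_{\mathcal B}\rfloor\big)\big(\lceil y_{\mathcal B}\rceil-y_{\mathcal B}\big).$$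
   Context: Notation: $y_{\mathcal B}=\sum_{i\in\mathcal B}y_i$, $x_{\mathcal B,j}=\sum_{i\in\mathcal B}x_{i,j}$, $x_{\mathcal B,\mathcal J}=\sum_{i\in\mathcal B,j\in\mathcal J}x_{i,j}$. The function $f:\mathbb Z_{\ge0}\times\mathbb R_{\ge0}\to\mathbb R$ is defined by $f(p,q)=qu$ if $q\le\lfloor p/u\rfloor$; $f(p,q)=u\lfloor p/u\rfloor+u(p/u-\lfloor p/u\rfloor)(q-\lfloor p/u\rfloor)$ if $\lfloor p/u\rfloor<q<\lceil p/u\rceil$; $f(p,q)=p$ if $q\ge\lceil p/u\rceil$. *)

From mathcomp Require Import all_boot all_order all_algebra.
From mathcomp Require Import reals.
Set Implicit Arguments. Unset Strict Implicit. Unset Printing Implicit Defensive.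
Import Order.TTheory GRing.Theory Num.Theory.
Local Open Scope ring_scope.

(* The function f(p,q) of the paper, with the integer parameter u explicit. *)
Definition fcap (R : realType) (u p : nat) (q : R) : R :=
  let r : R := p%:R / u%:R in
  let fl : R := (Num.floor r)%:~R in
  let ce : R := (Num.ceil r)%:~R in
  if q <= fl then q * u%:R
  else if q < ce then u%:R * fl + u%:R * (r - fl) * (q - fl)
  else p%:R.

(** Write [a_j = x_{B,j}], [k = floor y_B] and [e = y_B - k].  Pointwise
    [a (1 - a) >= e (1 - a)] when [a >= e] and [a (1 - a) >= (1 - e) a]
    otherwise; summing over [J = {j | a_j >= e}] bounds the left-hand side
    below by [e |J| + (1 - e) u y'_B - x_{B,J}].  The hypothesis on [B] bounds
    [x_{B,J}] by [f(|J|, y_B)], and on each of the three pieces of [f] one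
    checks [f(t, y_B) <= e t + (1 - e) u k].  What remains is
    [(1 - e) u (y'_B - k)], which dominates the right-hand side because
    [k <= floor y'_B] and [ceil y_B - y_B <= 1 - e]. *)

From mathcomp Require Import all_boot all_order all_algebra.
From mathcomp Require Import reals ring lra.
Import Order.TTheory GRing.Theory Num.Theory.
Local Open Scope ring_scope.

Lemma ceil_le_floorD1 {R : archiRealDomainType} (x : R) :
  (Num.ceil x)%:~R <= (Num.floor x)%:~R + 1 :> R.
Proof. by rewrite ceil_floor intrD lerD2l; case: (x \is a Num.int). Qed.

Lemma sum_mul1B_ge_threshold {R : realDomainType} {C : finType} (a : C -> R)
    (e : R) :
  (forall j, 0 <= a j <= 1) ->
  e * #|[set j | e <= a j]|%:R + (1 - e) * \sum_j a j
    - \sum_(j in [set j | e <= a j]) a j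
  <= \sum_j a j * (1 - a j).
Proof.
move=> a01; set J := [set j | e <= a j].
have -> : e * #|J|%:R + (1 - e) * \sum_j a j - \sum_(j in J) a j
    = \sum_(j in J) e * (1 - a j) + \sum_(j | j \notin J) (1 - e) * a j.
  rewrite (bigID (mem J) _ a) /= -!mulr_sumr sumrB sumr_const.
  by rewrite -[in LHS](mulr_natr 1) mul1r; ring.
rewrite [X in _ <= X](bigID (mem J)) /=; apply: lerD; apply: ler_sum => j.
  have /andP[_ a_le1] := a01 j.
  by rewrite inE => e_le_a; apply: ler_wpM2r; rewrite ?subr_ge0.
have /andP[a_ge0 _] := a01 j.
rewrite inE -ltNge => a_lt_e; rewrite mulrC; apply: ler_wpM2l => //.
by rewrite lerB // ltW.
Qed.

Lemma fcap_le_floor_mix {R : realType} (u t : nat) (Y : R) : (0 < u)%N ->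
  fcap u t Y <= (Y - (Num.floor Y)%:~R) * t%:R
                + (1 - (Y - (Num.floor Y)%:~R)) * (u%:R * (Num.floor Y)%:~R).
Proof.
move=> u_gt0; have u_pos : (0 : R) < u%:R by rewrite ltr0n.
have /andP[k_le_Y Y_lt_k1] := floor_itv Y; rewrite intrD in Y_lt_k1.
set r : R := t%:R / u%:R.
have tE : (t%:R : R) = r * u%:R by rewrite /r mulfVK // gt_eqF.
rewrite /fcap -/r tE; set k : R := (Num.floor Y)%:~R in k_le_Y Y_lt_k1 *.
have /andP[fl_r _] := floor_itv r.
have /andP[_ r_ce] := ceil_itv r.
case: (leP Y (Num.floor r)%:~R) => [Y_le_fl | fl_lt_Y].
  have [Y_eq_k | k1_le_r] : Y = k \/ k + 1 <= r.
    have : Num.floor Y <= Num.floor r by rewrite floor_ge_int -/k; lra.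
    rewrite le_eqVlt => /orP[/eqP fl_eq | fl_lt].
    - by left; apply/eqP; rewrite eq_le k_le_Y andbT /k fl_eq.
    - by right; move: fl_lt; rewrite -lezD1 -(ler_int R) intrD; lra.
  { by rewrite Y_eq_k; lra. }
  have : 0 <= u%:R * ((Y - k) * (r - (k + 1))).
    by apply: mulr_ge0; [exact: ltW | apply: mulr_ge0; rewrite subr_ge0].
  nra.
case: (ltP Y (Num.ceil r)%:~R) => [Y_lt_ce | ce_le_Y].
  have fl_eq : Num.floor r = Num.floor Y.
    apply/eqP; rewrite eq_le floor_ge_int ltW //= -ltzD1 floor_lt_int intrD.
    by have := ceil_le_floorD1 r; lra.
  by rewrite fl_eq -/k; nra.
have r_le_k : r <= k by rewrite (le_trans r_ce) // ler_int floor_ge_int.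
have : 0 <= u%:R * ((1 - (Y - k)) * (k - r)).
  by apply: mulr_ge0; [exact: ltW | apply: mulr_ge0; lra].
nra.
Qed.

Theorem lemma3 (R : realType) (u : nat) (hu : (0 < u)%N)
  (F C : finType) (x : F -> C -> R) (y : F -> R)
  (hx : forall i j, 0 <= x i j) (hy : forall i, 0 <= y i)
  (hxsum : forall j, \sum_(i : F) x i j = 1)
  (B : {set F})
  (hB : forall J : {set C},
      \sum_(i in B) \sum_(j in J) x i j <= fcap u #|J| (\sum_(i in B) y i))
  (hy' : (Num.floor (\sum_(i in B) y i))%:~R
         <= (u%:R)^-1 * \sum_(j : C) \sum_(i in B) x i j) :
  let yB := \sum_(i in B) y i in
  let y'B := (u%:R)^-1 * \sum_(j : C) \sum_(i in B) x i j in
  \sum_(j : C) (\sum_(i in B) x i j) * (1 - \sum_(i in B) x i j)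
    >= u%:R * (y'B - (Num.floor y'B)%:~R) * ((Num.ceil yB)%:~R - yB).
Proof.
cbv zeta; set yB := \sum_(i in B) y i.
set y'B := (u%:R)^-1 * _; set a := fun j => \sum_(i in B) x i j.
set k : R := (Num.floor yB)%:~R; set m : R := (Num.floor y'B)%:~R.
set e := yB - k; set J := [set j | e <= a j].
have u_pos : (0 : R) < u%:R by rewrite ltr0n.
have a01 j : 0 <= a j <= 1.
  rewrite sumr_ge0 //= -(hxsum j) [X in _ <= X](bigID (mem B)) /= lerDl.
  exact: sumr_ge0.
have sum_a : \sum_j a j = u%:R * y'B by rewrite /y'B mulVKf ?gt_eqF.
have := sum_mul1B_ge_threshold a e a01; rewrite -/J sum_a => lower.
have capJ : \sum_(j in J) a j <= fcap u #|J| yB.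
  by rewrite /a exchange_big; exact: hB.
have := fcap_le_floor_mix u #|J| yB hu; rewrite -/k -/e => mix.
have /andP[k_le_Y Y_lt_k1] := floor_itv yB; rewrite intrD -/k in Y_lt_k1.
have /andP[m_le_y' _] := floor_itv y'B; rewrite -/m in m_le_y'.
have k_le_m : k <= m by rewrite ler_int floor_ge_int.
have := ceil_le_floorD1 yB; rewrite -/k => ceil_le.
have : 0 <= u%:R * (y'B - m) * (1 - e - ((Num.ceil yB)%:~R - yB)).
  by apply: mulr_ge0; [apply: mulr_ge0 |]; rewrite /e; lra.
have : 0 <= u%:R * (1 - e) * (m - k).
  by apply: mulr_ge0; [apply: mulr_ge0 |]; rewrite /e; lra.
nra.
Qed.
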